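(* Let $n\ge2$ and let $f:\{0,1\}^{n-1}\to\{0,1\}$ be a monotone Boolean function (i.e. $x\le y$ coordinatewise implies $f(x)\le f(y)$). Define the orientation $\Phi_f$ of the $n$-cube by: for $i\ne n$, $v\to v\oplus i$ iff $v_i=0$; and $v\to v\oplus n$ iff $v_n+f(v')=1$, where $v'\in\{0,1\}^{n-1}$ consists of the first $n-1$ coordinates of $v$. Then $\Phi_f$ is an acyclic, locally uniform, strongly Holt--Klee unique-sink orientation, and distinct monotone functions $f$ give distinct orientations $\Phi_f$.
   Context: For $v\in\{0,1\}^n$ and $I\subseteq[n]$, $v\oplus I$ is obtained from $v$ by flipping the coordinates in $I$; $v\oplus i:=v\oplus\{i\}$. The $n$-cube has vertex set $\{0,1\}^n$ and edges $\{v,v\oplus i\}$. A subcube is the induced subgraph on a vertex set $\{v\oplus I: I\subseteq C\}$ for some vertex $v$ and $C\subseteq[n]$; its dimension is $|C|$. A unique-sink orientation (USO) is an orientation of the $n$-cube in which every subcube has exactly one sink; then every subcube also has a unique source. For an orientation $\Phi$ and $F\subseteq[n]$, $\Phi^{(F)}$ is obtained by reversing all edges $\{v,v\oplus i\}$ with $i\in F$. A USO is Holt--Klee if in every subcube of dimension $d$ there are $d$ directed paths from the subcube's source to its sink, pairwise sharing no vertex other than source and sink. A USO $\Phi$ is strongly Holt--Klee if $\Phi^{(F)}$ is Holt--Klee for every $F\subseteq[n]$. A USO is locally uniform if (i) whenever $u_i=u_j=0$, $u\to u\oplus i$ and $u\to u\oplus j$, then $u\oplus i\to u\oplus\{i,j\}$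 and $u\oplus j\to u\oplus\{i,j\}$; and (ii) whenever $u_i=u_j=0$, $u\oplus i\to u$ and $u\oplus j\to u$, then $u\oplus\{i,j\}\to u\oplus i$ and $u\oplus\{i,j\}\to u\oplus j$. Acyclic means no directed cycle. *)

From mathcomp Require Import all_boot.
Set Implicit Arguments. Unset Strict Implicit. Unset Printing Implicit Defensive.

Definition vert (n : nat) := {ffun 'I_n -> bool}.

Definition flipS n (v : vert n) (I : {set 'I_n}) : vert n :=
  [ffun j => if j \in I then ~~ v j else v j].
Definition flip n (v : vert n) (i : 'I_n) : vert n := flipS v [set i].

(* An orientation is encoded by o : vert n -> 'I_n -> bool, where
   o v i = true means the edge {v, v (+) i} is directed v -> v (+) i.
   Consistency: each edge gets exactly one direction. *)
Definition orientation n := vert n -> 'I_n -> bool.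
Definition is_orientation n (o : orientation n) : Prop :=
  forall v i, o (flip v i) i = ~~ o v i.

Definition subcube n (v : vert n) (C : {set 'I_n}) : {set vert n} :=
  [set flipS v I | I in powerset C].

Definition is_sink n (o : orientation n) (v : vert n) C (u : vert n) : bool :=
  (u \in subcube v C) && [forall i in C, ~~ o u i].
Definition is_source n (o : orientation n) (v : vert n) C (u : vert n) : bool :=
  (u \in subcube v C) && [forall i in C, o u i].

Definition is_USO n (o : orientation n) : Prop :=
  is_orientation o /\
  forall (v : vert n) (C : {set 'I_n}), #|[set u | is_sink o v C u]| = 1.

Definition dedge n (o : orientation n) (C : {set 'I_n}) : rel (vert n) :=
  fun u w => [exists i in C, (w == flip u i) && o u i].

(* A directed (simple) path s = x_0 -> x_1 -> ... -> x_k = t inside the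
   subcube with direction set C, given by its tail [x_1; ...; x_k]. *)
Definition dpath n (o : orientation n) C (s t : vert n) (q : seq (vert n)) : bool :=
  [&& path (dedge o C) s q, last s q == t & uniq (s :: q)].

Definition holt_klee n (o : orientation n) : Prop :=
  forall (v : vert n) (C : {set 'I_n}) (s t : vert n),
    is_source o v C s -> is_sink o v C t ->
    exists ps : seq (seq (vert n)),
      [/\ size ps = #|C|, uniq ps,
          forall q, q \in ps -> dpath o C s t q &
          forall a b : nat, a < b < size ps ->
            forall x, x \in s :: nth [::] ps a -> x \in s :: nth [::] ps b ->
              x = s \/ x = t].

Definition reorient n (o : orientation n) (F : {set 'I_n}) : orientation n :=
  fun v i => if i \in F then ~~ o v i else o v i.

Definition strongly_holt_klee n (o : orientation n) : Prop :=
  forall F : {set 'I_n}, holt_klee (reorient o F).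

Definition locally_uniform n (o : orientation n) : Prop :=
  forall (u : vert n) (i j : 'I_n), i != j -> u i = false -> u j = false ->
    (o u i -> o u j -> o (flip u i) j /\ o (flip u j) i) /\
    (o (flip u i) i -> o (flip u j) j ->
       o (flip (flip u i) j) j /\ o (flip (flip u j) i) i).

Definition acyclic n (o : orientation n) : Prop :=
  forall (u : vert n) (p : seq (vert n)),
    path (dedge o setT) u p -> last u p = u -> p = [::].

Definition monotone m (f : {ffun 'I_m -> bool} -> bool) : Prop :=
  forall x y : {ffun 'I_m -> bool}, (forall i, x i <= y i) -> f x <= f y.

(* The n-cube with n = m.+1; coordinate n is ord_max, v' = first m coords. *)
Definition vprefix m (v : vert m.+1) : {ffun 'I_m -> bool} :=
  [ffun i : 'I_m => v (widen_ord (leqnSn m) i)].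

Definition Phi m (f : {ffun 'I_m -> bool} -> bool) : orientation m.+1 :=
  fun v i => if i == ord_max then (v ord_max (+) f (vprefix v)) else ~~ v i.

From mathcomp Require Import all_boot zify.
Set Implicit Arguments. Unset Strict Implicit. Unset Printing Implicit Defensive.

(* All low directions of Phi_f point from 0 to 1, and monotonicity of f makes the top direction
   compatible with them, since flipping a low coordinate from 0 to 1 can only raise f. This
   gives local uniformity; acyclicity follows from a potential (twice the number of low ones,
   plus one when the top coordinate equals f of the prefix) that increases along every edge.
   After any reorientation the low directions are still uniform, each pointing away from the
   source s of a subcube. If x_0, ..., x_(d-1) are the low directions of the subcube, the d paths
   from s flipping them in cyclic order from x_k meet only at s and at the sink t. When the top
   direction belongs to the subcube one more path is needed: if t agrees with s on top, go up the
   top edge, across all low directions and back down; otherwise let the k-th path cross the top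
   edge after its first d - k steps, and add a path crossing it first. Listing first the low
   directions where s already equals f(s'), every crossing point has f-value f(s') = f(t'), so
   the top edges used point forward. *)

Section Cube.
Variable n : nat.
Implicit Types (v u : vert n) (I : {set 'I_n}).

Lemma flipE v i j : flip v i j = (if j == i then ~~ v j else v j).
Proof. by rewrite ffunE in_set1. Qed.

Lemma flipS0 v : flipS v set0 = v.
Proof. by apply/ffunP => j; rewrite ffunE in_set0. Qed.

Lemma flipS_inj v : injective (flipS v).
Proof.
move=> I J /ffunP eqIJ; apply/setP => j; move: (eqIJ j); rewrite !ffunE.
by do 2 case: (_ \in _); case: (v j).
Qed.

Lemma flip_flipS v I i : i \notin I -> flip (flipS v I) i = flipS v (i |: I).
Proof.
move=> iI; apply/ffunP => j; rewrite flipE !ffunE !inE.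
by case: eqP => [->|]; rewrite ?(negbTE iI).
Qed.

Lemma flip_flipS_mem v I i : i \in I -> flip (flipS v I) i = flipS v (I :\ i).
Proof.
move=> iI; apply/ffunP => j; rewrite flipE !ffunE !inE.
by case: eqP => [->|]; rewrite ?iI ?negbK.
Qed.

Lemma subcubeP v u (C : {set 'I_n}) :
  reflect (forall i, i \notin C -> u i = v i) (u \in subcube v C).
Proof.
apply: (iffP imsetP) => [[I]|uv].
  rewrite powersetE => /subsetP IC -> i iC; rewrite ffunE.
  by case: ifP => // /IC; rewrite (negbTE iC).
exists [set i | u i != v i].
  by rewrite powersetE; apply/subsetP => i; rewrite inE; apply: contraR => /uv ->.
by apply/ffunP => i; rewrite ffunE inE; case: (u i); case: (v i).
Qed.

End Cube.

(** * Cyclic intervals *)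

Definition cyc_offset (d k e : nat) : nat := if k <= e then e - k else d + e - k.

Definition cyc_interval (T : finType) (xs : seq T) (k j : nat) : {set T} :=
  [set x in xs | cyc_offset (size xs) k (index x xs) < j].

Section CyclicIntervals.
Variables (T : finType) (xs : seq T).
Local Notation d := (size xs).
Local Notation I := (cyc_interval xs).

Lemma cyc_interval_sub k j : {subset I k j <= xs}.
Proof. by move=> x; rewrite inE => /andP[]. Qed.

Lemma cyc_interval0 k : I k 0 = set0.
Proof. by apply/setP => x; rewrite !inE ltn0 andbF. Qed.

Lemma cyc_interval_full k : k <= d -> I k d = [set x in xs].
Proof.
move=> kd; apply/setP => x; rewrite !inE; case: (boolP (x \in xs)) => //= xin.
have xd : index x xs < d by rewrite index_mem.
by rewrite /cyc_offset; case: (leqP k (index x xs)) => ?; lia.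
Qed.

Lemma cyc_interval_drop k : k <= d -> I k (d - k) = [set x in xs | k <= index x xs].
Proof.
move=> kd; apply/setP => x; rewrite !inE; case: (boolP (x \in xs)) => //= xin.
have xd : index x xs < d by rewrite index_mem.
by rewrite /cyc_offset; case: (leqP k (index x xs)) => ?; lia.
Qed.

Hypothesis xs_uniq : uniq xs.

Lemma cyc_intervalS k j : k <= d -> j < d ->
  exists2 x, x \in xs & x \notin I k j /\ I k j.+1 = x |: I k j.
Proof.
move=> kd jd; have [x0 _] : exists x0 : T, true by case: xs jd => [|y ?] //; exists y.
pose p := if k + j < d then k + j else k + j - d.
have pd : p < d by rewrite /p; case: (ltnP (k + j) d) => ?; lia.
have offp : cyc_offset d k p = j.
  by rewrite /p /cyc_offset; case: (ltnP (k + j) d) => ?; case: leqP => ?; lia.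
have idx y : y \in xs -> (y == nth x0 xs p) = (index y xs == p).
  move=> yin; apply/eqP/eqP => [->|<-]; [exact: index_uniq | exact/esym/nth_index].
exists (nth x0 xs p); first exact: mem_nth.
split; first by rewrite !inE mem_nth //= index_uniq // offp ltnn.
apply/setP => y; rewrite !inE; case: (boolP (y \in xs)) => yin; rewrite ?andbF ?orbF //=.
  have yd : index y xs < d by rewrite index_mem.
  rewrite idx //; move: offp; rewrite /p /cyc_offset.
  by case: (ltnP (k + j) d) => ? ?; case: (leqP k (index y xs)) => ?; lia.
by apply/esym/negbTE; apply: contraNneq yin => ->; apply: mem_nth.
Qed.

Lemma card_cyc_interval k j : k <= d -> j <= d -> #|I k j| = j.
Proof.
move=> kd; elim: j => [|j IH] jd; first by rewrite cyc_interval0 cards0.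
have [x _ [xI ->]] := cyc_intervalS kd jd.
by rewrite cardsU1 xI IH // ltnW.
Qed.

Lemma cyc_interval_inj j k k' : 0 < j < d -> k < d -> k' < d -> I k j = I k' j -> k = k'.
Proof.
move=> jd kd k'd eqI; have [x0 _] : exists x0 : T, true by case: xs kd => [|y ?] //; exists y.
pose q := if k == 0 then d.-1 else k.-1.
have qd : q < d by rewrite /q; case: eqP => ?; lia.
have inI k0 e : e < d -> (nth x0 xs e \in I k0 j) = (cyc_offset d k0 e < j).
  by move=> ed; rewrite inE mem_nth //= index_uniq.
have kin : nth x0 xs k \in I k' j by rewrite -eqI inI // /cyc_offset leqnn; lia.
have qout : nth x0 xs q \notin I k' j.
  by rewrite -eqI inI // /q /cyc_offset; case: eqP => ?; case: ifP => ?; lia.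
move: kin qout; rewrite !inI // /q /cyc_offset.
by case: eqP => ?; do 2 case: ifP => ?; lia.
Qed.

End CyclicIntervals.

(** * Internally disjoint paths described by codes *)

Lemma pairwise_iota (r : rel nat) a n :
  (forall i j, a <= i -> i < j -> j < a + n -> r i j) -> pairwise r (iota a n).
Proof.
move=> rij; apply/(pairwiseP 0) => i j; rewrite !inE size_iota => ilt jlt ij.
by rewrite !nth_iota //; apply: rij; lia.
Qed.

Definition hk_paths n (o : orientation n) (C : {set 'I_n}) (s t : vert n) : Prop :=
  exists ps : seq (seq (vert n)),
    [/\ size ps = #|C|, uniq ps, forall q, q \in ps -> dpath o C s t q &
        forall a b : nat, a < b < size ps ->
          forall x, x \in s :: nth [::] ps a -> x \in s :: nth [::] ps b -> x = s \/ x = t].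

Definition code_run (b : bool) (a n : nat) : seq (bool * nat) := [seq (b, j) | j <- iota a n].

Lemma mem_code_run b a n c : (c \in code_run b a n) = (c.1 == b) && (a <= c.2 < a + n).
Proof.
case: c => b' j; apply/mapP/andP => /= [[j']|[/eqP -> jan]].
  by rewrite mem_iota => jan [-> ->].
by exists j; rewrite ?mem_iota.
Qed.

Lemma uniq_code_run b a n : uniq (code_run b a n).
Proof. by rewrite map_inj_uniq ?iota_uniq // => j j' []. Qed.

Lemma last_code_run b a n : last (b, a) (code_run b a.+1 n) = (b, a + n).
Proof. by elim: n a => [|n IH] a; rewrite ?addn0 //= IH addSnnS. Qed.

Section CodePaths.
Variables (m : nat) (o : orientation m.+1) (C : {set 'I_m.+1}) (s : vert m.+1).
Variable cs : seq 'I_m.+1.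
Hypotheses (cs_uniq : uniq cs) (max_notin_cs : ord_max \notin cs).
Hypotheses (cs_sub : {subset cs <= C}) (o_cs : forall u x, x \in cs -> o u x = (u x == s x)).
Local Notation d := (size cs).
Local Notation I := (cyc_interval cs).

(* A code (b, j) on track k stands for the vertex reached from s by flipping the top
   coordinate if b, and the j coordinates of cs starting cyclically at position k. *)
Definition code_vertex k (c : bool * nat) : vert m.+1 :=
  flipS s ((if c.1 then [set ord_max] else set0) :|: I k c.2).

Lemma code_vertex_origin k : code_vertex k (false, 0) = s.
Proof. by rewrite /code_vertex cyc_interval0 setU0 flipS0. Qed.

Lemma code_vertex_end k b : k <= d -> code_vertex k (b, d) = code_vertex 0 (b, d).
Proof. by move=> kd; rewrite /code_vertex /= !cyc_interval_full. Qed.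

Lemma max_notin_cyc_interval k j : ord_max \notin I k j.
Proof. by apply: contra max_notin_cs; apply: cyc_interval_sub. Qed.

Lemma code_vertex_eq k k' c c' : k < d -> k' < d -> c.2 <= d -> c'.2 <= d ->
  code_vertex k c = code_vertex k' c' -> c = c' /\ [|| k == k', c.2 == 0 | c.2 == d].
Proof.
case: c c' => [b j] [b' j'] /= kd k'd jd j'd /flipS_inj eqY.
have eb : b = b'.
  move/setP/(_ ord_max): eqY; rewrite !in_setU !(negbTE (max_notin_cyc_interval _ _)) !orbF.
  by case: b; case: b'; rewrite ?inE ?eqxx.
have eqI : I k j = I k' j'.
  case: b eb eqY => <-; rewrite ?set0U // => /(congr1 (fun Y => Y :\ ord_max)).
  by rewrite !setU1K ?max_notin_cyc_interval.
have ej : j = j'.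
  by rewrite -(card_cyc_interval cs_uniq (ltnW kd) jd) eqI card_cyc_interval // ltnW.
subst b' j'; split=> //; case: (posnP j) => [->|j0]; first by rewrite orbT.
case: (ltnP j d) => [jlt|jge]; last by rewrite (@eqn_leq j) jd jge !orbT.
by rewrite (cyc_interval_inj cs_uniq _ kd k'd eqI) ?eqxx // j0.
Qed.

Definition code_edge k : rel (bool * nat) := fun c c' =>
  ((c' == (c.1, c.2.+1)) && (c.2 < d)) ||
  [&& c' == (~~ c.1, c.2), ord_max \in C & o (code_vertex k c) ord_max].

Lemma code_edge_dedge k : k <= d ->
  {homo code_vertex k : c c' / code_edge k c c' >-> dedge o C c c'}.
Proof.
move=> kd [b j] c' /= /orP[/andP[/eqP -> jd] | /and3P[/eqP -> NC oc]]; apply/existsP.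
  have [x xcs [xI eI]] := cyc_intervalS cs_uniq kd jd.
  have xY : x \notin (if b then [set ord_max] else set0) :|: I k j.
    rewrite inE negb_or xI andbT; case: ifP => _; rewrite inE //.
    by apply: contraNneq max_notin_cs => <-.
  exists x; rewrite cs_sub //= o_cs // /code_vertex /= eI setUCA flip_flipS //.
  by rewrite eqxx ffunE (negbTE xY) eqxx.
exists ord_max; rewrite NC oc andbT /code_vertex /=.
case: b {oc} => /=; last by rewrite set0U flip_flipS ?max_notin_cyc_interval.
by rewrite set0U flip_flipS_mem ?setU1K ?max_notin_cyc_interval ?setU11.
Qed.

Definition code_path k (bt : bool) (L : seq (bool * nat)) : bool :=
  [&& path (code_edge k) (false, 0) L, uniq ((false, 0) :: L),
      all (fun c => c.2 <= d) L & last (false, 0) L == (bt, d)].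

Lemma dpath_code_path k bt L : k < d -> code_path k bt L ->
  dpath o C s (code_vertex 0 (bt, d)) [seq code_vertex k c | c <- L].
Proof.
move=> kd /and4P[Lpath Luniq /allP Ld /eqP Llast].
rewrite /dpath -(code_vertex_origin k) last_map Llast code_vertex_end ?eqxx /=; last exact: ltnW.
rewrite (homo_path (code_edge_dedge (ltnW kd)) Lpath) /=.
change (uniq [seq code_vertex k c | c <- (false, 0) :: L]); rewrite map_inj_in_uniq //.
by move=> c c' /predU1P[->|/Ld cd] /predU1P[->|/Ld c'd] /code_vertex_eq[].
Qed.

Lemma code_path_inner k bt L c : k < d -> code_path k bt L -> c \in L -> c != (bt, d) ->
  code_vertex k c != s /\ code_vertex k c != code_vertex 0 (bt, d).
Proof.
move=> kd /and4P[_ /andP[L0 _] /allP Ld _] cL ct; have cd := Ld c cL.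
rewrite -{1}(code_vertex_origin k) -(code_vertex_end _ (ltnW kd)); split.
  by apply: contraNneq L0 => /code_vertex_eq[] // <- _.
by apply: contraNneq ct => /code_vertex_eq[] // -> _.
Qed.

(* By code_vertex_eq, codes on different tracks give the same vertex only when j = 0 or j = d. *)
Definition codes_apart (bt : bool) (p p' : nat * seq (bool * nat)) : bool :=
  all (fun c => (c \in p'.2) && [|| p.1 == p'.1, c.2 == 0 | c.2 == d] ==> (c == (bt, d))) p.2
  && (has (predC1 (bt, d)) p.2 || has (predC1 (bt, d)) p'.2).

Local Notation target bt := (code_vertex 0 (bt, d)).

Lemma code_paths_meet_at_ends bt k L k' L' x : k < d -> k' < d ->
  code_path k bt L -> code_path k' bt L' -> codes_apart bt (k, L) (k', L') ->
  x \in s :: [seq code_vertex k c | c <- L] -> x \in s :: [seq code_vertex k' c | c <- L'] ->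
  x = s \/ x = target bt.
Proof.
move=> kd k'd /and4P[_ _ /allP Ld _] /and4P[_ _ /allP L'd _] /andP[/allP common _].
rewrite !in_cons; case: (x =P s) => [|_] /=; first by left.
move=> /mapP[c cL ->] /mapP[c' c'L'].
move/(code_vertex_eq kd k'd (Ld c cL) (L'd c' c'L')) => [cc' corner]; subst c'.
by move: (common c cL); rewrite c'L' corner /= => /eqP ->; right; rewrite code_vertex_end // ltnW.
Qed.

Lemma code_paths_neq bt k L k' L' : k < d -> k' < d ->
  code_path k bt L -> code_path k' bt L' -> codes_apart bt (k, L) (k', L') ->
  [seq code_vertex k c | c <- L] != [seq code_vertex k' c | c <- L'].
Proof.
move=> kd k'd kL k'L' apart; apply/eqP => same.
have not_inner k0 L0 c : k0 < d -> code_path k0 bt L0 -> c \in L0 -> c != (bt, d) ->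
    code_vertex k0 c \in [seq code_vertex k c | c <- L] -> False.
  move=> k0d k0L0 cL0 ct xq; have [ns nt] := code_path_inner k0d k0L0 cL0 ct.
  have xq' : code_vertex k0 c \in [seq code_vertex k' c | c <- L'] by rewrite -same.
  have := code_paths_meet_at_ends kd k'd kL k'L' apart.
  by move=> /(_ (code_vertex k0 c)); rewrite !in_cons xq xq' !orbT => /(_ isT isT) [] /eqP;
    rewrite ?(negbTE ns) ?(negbTE nt).
case/andP: apart => _ /orP[] /hasP[c cL ct].
  by apply: (not_inner k L c) => //; apply: map_f.
by apply: (not_inner k' L' c) => //; rewrite same; apply: map_f.
Qed.

Lemma holt_klee_of_codes bt (P : seq (nat * seq (bool * nat))) :
  size P = #|C| -> (forall p, p \in P -> (p.1 < d) && code_path p.1 bt p.2) ->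
  pairwise (codes_apart bt) P -> hk_paths o C s (target bt).
Proof.
move=> Psize Pok Papart; pose vertices p := [seq code_vertex p.1 c | c <- p.2].
exists (map vertices P); split.
- by rewrite size_map.
- rewrite uniq_pairwise pairwise_map; apply: sub_in_pairwise (allss P) Papart.
  move=> [k L] [k' L'] /Pok/andP[kd kL] /Pok/andP[k'd k'L']; exact: code_paths_neq.
- by move=> q /mapP[p /Pok/andP[kd kL] ->]; apply: dpath_code_path.
- rewrite size_map => a b /andP[ab bP]; have aP := ltn_trans ab bP.
  rewrite !(nth_map (0, [::])) //.
  have := (pairwiseP (0, [::]) Papart) a b aP bP ab.
  case: (nth _ P a) (mem_nth (0, [::]) aP) => k L /Pok/andP[kd kL].
  case: (nth _ P b) (mem_nth (0, [::]) bP) => k' L' /Pok/andP[k'd k'L'].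
  by move=> apart x; apply: code_paths_meet_at_ends.
Qed.

Lemma codes_apartP bt k L k' L' :
  (forall b j, (b, j) \in L -> (b, j) \in L' -> [|| k == k', j == 0 | j == d] ->
     (b == bt) && (j == d)) ->
  (exists2 c, c \in L ++ L' & c != (bt, d)) -> codes_apart bt (k, L) (k', L').
Proof.
move=> common [c cLL' ct]; apply/andP; split.
  by apply/allP => -[b j] cL; apply/implyP => /andP[cL' corner]; rewrite xpair_eqE common.
by rewrite -has_cat; apply/hasP; exists c.
Qed.

Lemma path_code_run k b a n : a + n <= d -> path (code_edge k) (b, a) (code_run b a.+1 n).
Proof.
elim: n a => [//|n IH] a an /=; rewrite IH ?addSnnS // andbT.
by rewrite /code_edge /= eqxx /=; lia.
Qed.

Lemma code_path_cyclic k : k < d -> code_path k false (code_run false 1 d).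
Proof.
move=> kd; rewrite /code_path path_code_run // last_code_run eqxx andbT.
rewrite (uniq_code_run false 0 d.+1) /=; apply/allP => -[b j]; rewrite mem_code_run /= => ?; lia.
Qed.

Lemma pairwise_cyclic : pairwise (codes_apart false) [seq (k, code_run false 1 d) | k <- iota 0 d].
Proof.
rewrite pairwise_map; apply: pairwise_iota => k k' _ kk' k'd.
apply: codes_apartP => [b j|]; first by rewrite !mem_code_run /= => ? ? ?; lia.
by exists (false, 1); rewrite ?mem_cat ?mem_code_run /= ?xpair_eqE; lia.
Qed.

Lemma hk_paths_cyclic : #|C| = d -> hk_paths o C s (code_vertex 0 (false, d)).
Proof.
move=> Cd; apply: (holt_klee_of_codes _ _ pairwise_cyclic); first by rewrite size_map size_iota.
by move=> p /mapP[k]; rewrite mem_iota => kd ->; rewrite /= code_path_cyclic ?andbT.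
Qed.

Definition codes_via_top j := code_run false 1 j ++ code_run true j (d - j).+1.

Lemma code_path_via_top k j : j <= d -> ord_max \in C ->
  o (code_vertex k (false, j)) ord_max -> code_path k true (codes_via_top j).
Proof.
move=> jd NC oj.
have top_first : code_run true j (d - j).+1 = (true, j) :: code_run true j.+1 (d - j) by [].
apply/and4P; split.
- rewrite cat_path (@path_code_run k false 0 j) // last_code_run top_first /=.
  by rewrite (@path_code_run k true j (d - j)) ?subnKC // /code_edge /= eqxx NC oj.
- rewrite cons_uniq mem_cat !mem_code_run cat_uniq !uniq_code_run andbT.
  by apply/andP; split; [rewrite /=; lia | apply/hasPn => -[b i]; rewrite !mem_code_run /=; lia].
- by apply/allP => -[b i]; rewrite mem_cat !mem_code_run /= => ?; lia.
- by rewrite last_cat last_code_run top_first /= last_code_run subnKC.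
Qed.

Lemma codes_apart_via_top k j k' j' : j <= d -> j' <= d -> j != j' ->
  (k = k' -> (j == 0) && (j' == d)) -> codes_apart true (k, codes_via_top j) (k', codes_via_top j').
Proof.
move=> jd j'd jj' same_track; apply: codes_apartP => [b i|].
  rewrite !mem_cat !mem_code_run /= => ? ? /or3P[/eqP/same_track|/eqP|/eqP]; lia.
by exists (true, minn j j'); rewrite ?mem_cat ?mem_code_run /= ?xpair_eqE; lia.
Qed.

Lemma hk_paths_top_flipped : ord_max \in C -> #|C| = d.+1 -> 0 < d -> o s ord_max ->
  (forall k, k < d -> o (code_vertex k (false, d - k)) ord_max) ->
  hk_paths o C s (code_vertex 0 (true, d)).
Proof.
move=> NC Cd d0 os ok.
pose P := (0, codes_via_top 0) :: [seq (k, codes_via_top (d - k)) | k <- iota 0 d].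
apply: (holt_klee_of_codes (P := P)).
- by rewrite /= size_map size_iota.
- move=> p; rewrite inE => /predU1P[-> | /mapP[k]]; rewrite ?mem_iota /=.
    by rewrite d0 code_path_via_top // code_vertex_origin.
  by move=> kd ->; rewrite /= code_path_via_top ?leq_subr ?ok //; lia.
rewrite /P pairwise_cons all_map pairwise_map; apply/andP; split.
  apply/allP => k; rewrite mem_iota => kd; apply: codes_apart_via_top => //; lia.
apply: pairwise_iota => k k' _ kk' k'd; apply: codes_apart_via_top; lia.
Qed.

Lemma code_path_return_top k L : 0 < d -> ord_max \in C -> code_path k true L ->
  all (fun c => c.1) L -> o (code_vertex k (true, d)) ord_max ->
  code_path k false (rcons L (false, d)).
Proof.
move=> d0 NC /and4P[Lpath Luniq Ld /eqP Llast] Ltop ot.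
rewrite /code_path rcons_path -rcons_cons rcons_uniq all_rcons last_rcons Lpath Luniq Ld Llast.
rewrite /code_edge /= NC ot eqxx !andbT in_cons negb_or xpair_eqE -lt0n d0 /=.
by rewrite leqnn andbT; apply: contraTN Ltop => fd; apply/allPn; exists (false, d).
Qed.

Lemma hk_paths_top_unflipped : ord_max \in C -> #|C| = d.+1 -> 0 < d -> o s ord_max ->
  o (code_vertex 0 (true, d)) ord_max -> hk_paths o C s (code_vertex 0 (false, d)).
Proof.
move=> NC Cd d0 os ot.
pose P := (0, rcons (codes_via_top 0) (false, d)) :: [seq (k, code_run false 1 d) | k <- iota 0 d].
apply: (holt_klee_of_codes (P := P)).
- by rewrite /= size_map size_iota.
- move=> p; rewrite inE => /predU1P[-> | /mapP[k]]; last first.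
    by rewrite mem_iota => kd ->; rewrite /= code_path_cyclic ?andbT //; lia.
  apply/andP; split=> //; apply: code_path_return_top => //.
    by apply: code_path_via_top; rewrite ?code_vertex_origin.
  by apply/allP => -[b i]; rewrite mem_code_run /= => /andP[/eqP].
rewrite /P pairwise_cons pairwise_cyclic all_map andbT.
apply/allP => k _; apply: codes_apartP => [b i|].
  by rewrite mem_rcons in_cons !mem_code_run /= xpair_eqE => ? ? ?; lia.
by exists (true, 0); rewrite ?mem_cat ?mem_rcons ?in_cons ?mem_code_run /= ?xpair_eqE; lia.
Qed.

End CodePaths.

Lemma hk_paths_single_edge n (o : orientation n) (C : {set 'I_n}) s i :
  i \in C -> #|C| = 1 -> o s i -> hk_paths o C s (flip s i).
Proof.
move=> iC C1 osi; exists [:: [:: flip s i]]; split=> //.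
- move=> q; rewrite inE => /eqP ->; rewrite /dpath /= eqxx !andbT inE.
  apply/andP; split; first by apply/existsP; exists i; rewrite iC eqxx.
  by apply/eqP => /ffunP/(_ i); rewrite flipE eqxx; case: (s i).
- by move=> [|a] [|b] /andP[].
Qed.

(** * The orientation Phi_f *)

Section PhiOrientation.
Variables (m : nat) (f : {ffun 'I_m -> bool} -> bool).
Implicit Types (v u : vert m.+1) (i : 'I_m.+1).

Lemma widen_ord_neq_max (i : 'I_m) : widen_ord (leqnSn m) i != ord_max.
Proof. by rewrite -val_eqE /= neq_ltn ltn_ord. Qed.

Lemma vprefix_flip_max v : vprefix (flip v ord_max) = vprefix v.
Proof. by apply/ffunP => i; rewrite !ffunE in_set1 (negbTE (widen_ord_neq_max i)). Qed.

Lemma Phi_low v i : i != ord_max -> Phi f v i = ~~ v i.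
Proof. by rewrite /Phi => /negbTE ->. Qed.

Lemma Phi_max v : Phi f v ord_max = v ord_max (+) f (vprefix v).
Proof. by rewrite /Phi eqxx. Qed.

Lemma Phi_is_orientation : is_orientation (Phi f).
Proof.
move=> v i; have [->|iN] := eqVneq i ord_max.
  by rewrite !Phi_max vprefix_flip_max flipE eqxx addNb.
by rewrite !Phi_low // flipE eqxx.
Qed.

(* The sink of the subcube (v, C) sets every low coordinate of C, and sets its top
   coordinate (if in C) to f of its prefix. *)
Lemma Phi_USO : is_USO (Phi f).
Proof.
split; first exact: Phi_is_orientation.
move=> v C.
pose w : vert m.+1 := [ffun i => if (i \in C) && (i != ord_max) then true else v i].
pose t : vert m.+1 :=
  [ffun i => if (i == ord_max) && (ord_max \in C) then f (vprefix w) else w i].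
have prefix_t : vprefix t = vprefix w.
  by apply/ffunP => i; rewrite !ffunE (negbTE (widen_ord_neq_max i)).
suff -> : [set u | is_sink (Phi f) v C u] = [set t] by rewrite cards1.
apply/setP => u; rewrite !inE /is_sink; apply/idP/eqP.
- case/andP => /subcubeP u_out /forallP u_sink.
  have u_low i : i \in C -> i != ord_max -> u i = true.
    by move=> iC iN; move: (u_sink i); rewrite iC Phi_low // negbK.
  have prefix_u : vprefix u = vprefix w.
    apply/ffunP => i; rewrite !ffunE widen_ord_neq_max andbT.
    by case: ifP => [iC|/negbT iC]; [exact: u_low (widen_ord_neq_max i) | exact: u_out].
  apply/ffunP => i; rewrite !ffunE; have [->|iN] /= := eqVneq i ord_max.
    case: (boolP (ord_max \in C)) => NC /=; last exact: u_out.
    by move: (u_sink ord_max); rewrite NC Phi_max prefix_u; case: (u _); case: (f _).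
  by rewrite andbT; case: ifP => [iC|/negbT iC]; [exact: u_low | exact: u_out].
- move=> ->; apply/andP; split.
    apply/subcubeP => i iC; rewrite !ffunE (negbTE iC) /=.
    by case: ifP => // /andP[/eqP ii NC]; rewrite ii NC in iC.
  apply/forallP => i; apply/implyP; have [->|iN] := eqVneq i ord_max => iC.
    by rewrite Phi_max prefix_t !ffunE eqxx iC addbb.
  by rewrite Phi_low // !ffunE (negbTE iN) iC.
Qed.

Definition Phi_potential u : nat :=
  (#|[set j | (j != ord_max) && u j]|).*2 + (u ord_max == f (vprefix u)).

(* A low edge raises the first summand by two and lowers the second by at most one;
   a top edge raises the second summand from 0 to 1. *)
Lemma Phi_potential_edge u i : Phi f u i -> Phi_potential u < Phi_potential (flip u i).
Proof.
rewrite /Phi_potential; have [->|iN] := eqVneq i ord_max.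
  rewrite Phi_max vprefix_flip_max flipE eqxx.
  have -> : [set j | (j != ord_max) && flip u ord_max j] = [set j | (j != ord_max) && u j].
    by apply/setP => j; rewrite !inE flipE; case: eqP => [->|].
  by rewrite ltn_add2l; case: (u _); case: (f _).
rewrite Phi_low // => ui.
have -> : [set j | (j != ord_max) && flip u i j] = i |: [set j | (j != ord_max) && u j].
  by apply/setP => j; rewrite !inE flipE; case: (eqVneq j i) => [->|]; rewrite ?iN ?ui.
by rewrite cardsU1 inE iN (negbTE ui) /= doubleS; case: (_ == _); case: (_ == _); lia.
Qed.

Lemma Phi_acyclic : acyclic (Phi f).
Proof.
have increasing u p : path (dedge (Phi f) setT) u p -> p != [::] ->
    Phi_potential u < Phi_potential (last u p).
  elim: p u => [//|x p IH] u /= /andP[/existsP[i /and3P[_ /eqP -> edge]] p_path] _.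
  apply: leq_trans (Phi_potential_edge edge) _.
  by case: p IH p_path => [//|y p] IH p_path; apply/ltnW/IH.
move=> u p p_path p_last; apply/eqP; apply: contraT => p_nil.
by move: (increasing u p p_path p_nil); rewrite p_last ltnn.
Qed.

Hypothesis f_mono : monotone f.

Lemma monotone_flip_low u i : i != ord_max -> u i = false ->
  f (vprefix u) -> f (vprefix (flip u i)).
Proof.
move=> iN ui fu; have : f (vprefix u) <= f (vprefix (flip u i)).
  by apply: f_mono => l; rewrite !ffunE in_set1; case: eqP => [->|]; rewrite ?ui.
by rewrite fu; case: (f _).
Qed.

Lemma Phi_locally_uniform : locally_uniform (Phi f).
Proof.
move=> u i j ij ui uj.
have [iN|iN] := eqVneq i ord_max; have [jN|jN] := eqVneq j ord_max.
- by rewrite iN jN eqxx in ij.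
- rewrite iN in ui *; rewrite !Phi_max !Phi_low // !flipE !eqxx (negbTE jN).
  rewrite [ord_max == j]eq_sym (negbTE jN) ui uj /=.
  by split=> // fu; split=> //; apply: monotone_flip_low.
- rewrite jN in uj *; rewrite !Phi_max !Phi_low // !flipE !eqxx (negbTE iN).
  rewrite [ord_max == i]eq_sym (negbTE iN) ui uj /=.
  by split=> // _ fu; split=> //; apply: monotone_flip_low.
- rewrite !Phi_low // !flipE !eqxx (negbTE ij) eq_sym (negbTE ij) ui uj.
  by split.
Qed.

End PhiOrientation.

Lemma Phi_injective m (f g : {ffun 'I_m -> bool} -> bool) :
  (exists x, f x != g x) -> exists v i, Phi f v i != Phi g v i.
Proof.
case=> x fgx; pose v : vert m.+1 := [ffun i => if insub (val i) is Some j then x j else false].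
have prefix_v : vprefix v = x.
  by apply/ffunP => i; rewrite !ffunE /= insubT //= => ?; congr (x _); apply: val_inj.
by exists v, ord_max; rewrite !Phi_max prefix_v ffunE insubF ?ltnn.
Qed.

(** * Phi_f is strongly Holt--Klee *)

Lemma monotone_agree m (f : {ffun 'I_m -> bool} -> bool) (x y : {ffun 'I_m -> bool}) al :
  monotone f -> f x = al -> (forall i, y i != al -> y i = x i) -> f y = al.
Proof.
move=> f_mono fx yx; case: al fx yx => fx yx.
  have : f x <= f y.
    by apply: f_mono => i; case E: (y i); [case: (x i) | rewrite -yx E].
  by rewrite fx; case: (f y).
have : f y <= f x by apply: f_mono => i; case E: (y i); [rewrite -yx E |].
by rewrite fx; case: (f y).
Qed.

Section PhiHoltKlee.
Variables (m : nat) (f : {ffun 'I_m -> bool} -> bool) (F : {set 'I_m.+1}).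
Hypothesis f_mono : monotone f.
Local Notation o := (reorient (Phi f) F).
Variables (v : vert m.+1) (C : {set 'I_m.+1}) (s t : vert m.+1).
Hypotheses (s_source : is_source o v C s) (t_sink : is_sink o v C t).
Local Notation al := (f (vprefix s)).

Lemma reorient_Phi_low u i : i != ord_max -> o u i = (u i == (i \in F)).
Proof. by move=> iN; rewrite /reorient Phi_low //; case: (_ \in F); case: (u i). Qed.

Lemma reorient_Phi_max u : o u ord_max = u ord_max (+) f (vprefix u) (+) (ord_max \in F).
Proof. by rewrite /reorient Phi_max; case: (_ \in F); rewrite ?addbT ?addbF. Qed.

Lemma source_low i : i \in C -> i != ord_max -> s i = (i \in F).
Proof.
case/andP: s_source => _ /forallP src iC iN.
by move: (src i); rewrite iC reorient_Phi_low // => /eqP.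
Qed.

Lemma sink_low i : i \in C -> i != ord_max -> t i = ~~ (i \in F).
Proof.
case/andP: t_sink => _ /forallP snk iC iN.
by move: (snk i); rewrite iC reorient_Phi_low //; case: (t i); case: (_ \in F).
Qed.

Lemma sink_out i : i \notin C -> t i = s i.
Proof.
case/andP: t_sink => /subcubeP t_out _; case/andP: s_source => /subcubeP s_out _ iC.
by rewrite t_out ?s_out.
Qed.

Definition low_dirs : seq 'I_m.+1 :=
  [seq x <- enum (C :\ ord_max) | s x == al] ++ [seq x <- enum (C :\ ord_max) | s x != al].
Local Notation d := (size low_dirs).

Lemma mem_low_dirs x : (x \in low_dirs) = (x \in C) && (x != ord_max).
Proof.
by rewrite mem_cat !mem_filter -enumT mem_enum !inE !andbT -andb_orl orbN andTb andbC.
Qed.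

Lemma uniq_low_dirs : uniq low_dirs.
Proof.
rewrite cat_uniq !(filter_uniq _ (enum_uniq (C :\ ord_max))) andbT /=.
by apply/hasPn => x; rewrite !mem_filter => /andP[/negbTE ->].
Qed.

Lemma max_notin_low_dirs : ord_max \notin low_dirs.
Proof. by rewrite mem_low_dirs eqxx andbF. Qed.

Lemma low_dirs_sub : {subset low_dirs <= C}.
Proof. by move=> x; rewrite mem_low_dirs => /andP[]. Qed.

Lemma o_low_dirs u x : x \in low_dirs -> o u x = (u x == s x).
Proof. by rewrite mem_low_dirs => /andP[xC xN]; rewrite reorient_Phi_low // source_low. Qed.

Lemma card_dirs : #|C| = (ord_max \in C) + d.
Proof.
rewrite (cardsD1 ord_max) size_cat !size_filter cardE.
by rewrite -(count_predC (fun x => s x == al)).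
Qed.

Lemma sink_low_dirs i : i != ord_max -> t i = (if i \in low_dirs then ~~ s i else s i).
Proof.
move=> iN; rewrite mem_low_dirs iN andbT.
by case: ifP => [iC|/negbT iC]; [rewrite sink_low // source_low | exact: sink_out].
Qed.

Lemma sink_code : t = code_vertex s low_dirs 0 (t ord_max != s ord_max, d).
Proof.
apply/ffunP => i; rewrite ffunE /= cyc_interval_full // in_setU inE.
have [->|iN] := eqVneq i ord_max.
  rewrite (negbTE max_notin_low_dirs) orbF.
  by case: (t _); case: (s _); rewrite /= ?inE ?eqxx.
have -> : i \in (if t ord_max != s ord_max then [set ord_max] else set0) = false.
  by case: ifP; rewrite inE // (negbTE iN).
exact: sink_low_dirs.
Qed.

Lemma source_top : ord_max \in C -> s ord_max (+) al (+) (ord_max \in F).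
Proof. by case/andP: s_source => _ /forallP/(_ ord_max)/implyP; rewrite reorient_Phi_max. Qed.

Lemma sink_top : ord_max \in C -> ~~ (t ord_max (+) f (vprefix t) (+) (ord_max \in F)).
Proof. by case/andP: t_sink => _ /forallP/(_ ord_max)/implyP; rewrite reorient_Phi_max. Qed.

Local Notation vtx := (code_vertex s low_dirs).

Lemma vprefix_code_vertex k b j : vprefix (vtx k (b, j)) = vprefix (vtx k (false, j)).
Proof.
apply/ffunP => i; rewrite !ffunE !in_setU !inE; have iN := widen_ord_neq_max i.
by case: b; rewrite ?inE ?(negbTE iN).
Qed.

Lemma vprefix_sink : vprefix t = vprefix (vtx 0 (false, d)).
Proof. by rewrite {1}sink_code vprefix_code_vertex. Qed.

Lemma code_vertex_top_edge k b j : ord_max \in C ->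
  o (vtx k (b, j)) ord_max = (b == (f (vprefix (vtx k (false, j))) != al)).
Proof.
move=> NC; rewrite reorient_Phi_max vprefix_code_vertex ffunE in_setU.
rewrite (negbTE (max_notin_cyc_interval max_notin_low_dirs _ _)) orbF.
move: (source_top NC); case: b; rewrite ?inE ?eqxx /=;
  by case: (s _); case: (_ \in F); case: (f (vprefix s)); case: (f _).
Qed.

Lemma sink_flips_top : ord_max \in C -> (t ord_max != s ord_max) = (f (vprefix t) == al).
Proof.
move=> NC; move: (source_top NC) (sink_top NC).
by case: (t _); case: (s _); case: (_ \in F); case: (f (vprefix s)); case: (f _).
Qed.

(* This vertex flips the directions at positions >= k of low_dirs. If they all lie in the second
   block, it differs from s only where it takes the value f(s'); otherwise it differs from t only
   in first-block directions, where it keeps the value of s, namely f(s'). Either way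
   monotonicity gives f = f(s') = f(t'). *)
Lemma climb_keeps_value k : k < d -> f (vprefix t) = al ->
  f (vprefix (vtx k (false, d - k))) = al.
Proof.
move=> kd ft; set r := size [seq x <- enum (C :\ ord_max) | s x == al].
have index_first x : x \in low_dirs -> (index x low_dirs < r) = (s x == al).
  rewrite /low_dirs index_cat mem_cat => xin; case: ifP => [x1|/negbT x1].
    by rewrite index_mem x1; move: x1; rewrite mem_filter => /andP[->].
  rewrite ltnNge leq_addr /=; apply/esym/negbTE.
  by move: xin; rewrite (negbTE x1) /= mem_filter => /andP[].
have u_low x :
    vtx k (false, d - k) x = if (x \in low_dirs) && (k <= index x low_dirs) then ~~ s x else s x.
  have -> : vtx k (false, d - k) = flipS s [set x in low_dirs | k <= index x low_dirs].
    by rewrite -(cyc_interval_drop (ltnW kd)) -(set0U (cyc_interval _ _ _)).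
  by rewrite ffunE inE.
have agree (w : vert m.+1) : f (vprefix w) = al ->
    (forall x, x != ord_max -> vtx k (false, d - k) x != al -> vtx k (false, d - k) x = w x) ->
    f (vprefix (vtx k (false, d - k))) = al.
  move=> fw uw; apply: (monotone_agree f_mono fw) => i.
  by rewrite [vprefix w i]ffunE [vprefix _ i]ffunE; exact: uw (widen_ord_neq_max i).
case: (leqP r k) => rk; [apply: (agree s) | apply: (agree t)] => // x xN; rewrite u_low.
  case: ifP => // /andP[xin kx]; move: (index_first x xin); rewrite ltnNge (leq_trans rk kx).
  by case: (s x); case: al.
rewrite sink_low_dirs //; case: (boolP (x \in low_dirs)) => //= xin; case: leqP => //= xk.
by move: (index_first x xin); rewrite (ltn_trans xk rk) => /esym/eqP ->; rewrite eqxx.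
Qed.

Lemma Phi_hk_paths : hk_paths o C s t.
Proof.
case NC: (ord_max \in C); last first.
  rewrite sink_code sink_out ?NC // eqxx.
  apply: (hk_paths_cyclic uniq_low_dirs max_notin_low_dirs low_dirs_sub o_low_dirs).
  by rewrite card_dirs NC.
have os : o s ord_max by case/andP: s_source => _ /forallP/(_ ord_max); rewrite NC.
have Cd : #|C| = d.+1 by rewrite card_dirs NC.
have [d0|d_gt0] := posnP d.
  have -> : t = flip s ord_max.
    rewrite sink_code sink_flips_top // vprefix_sink d0 code_vertex_origin eqxx.
    by rewrite /code_vertex /= cyc_interval0 setU0.
  by apply: hk_paths_single_edge; rewrite // Cd d0.
rewrite sink_code sink_flips_top //; case: eqP => ft.
  apply: (hk_paths_top_flipped uniq_low_dirs max_notin_low_dirs low_dirs_sub o_low_dirs) => //.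
  move=> k kd.
  by rewrite code_vertex_top_edge // climb_keeps_value ?eqxx.
apply: (hk_paths_top_unflipped uniq_low_dirs max_notin_low_dirs low_dirs_sub o_low_dirs) => //.
by rewrite code_vertex_top_edge // -vprefix_sink; move/eqP: ft => ->.
Qed.

End PhiHoltKlee.

Lemma Phi_strongly_holt_klee m (f : {ffun 'I_m -> bool} -> bool) :
  monotone f -> strongly_holt_klee (Phi f).
Proof. by move=> f_mono F v C s t; apply: Phi_hk_paths. Qed.

Theorem mainTheorem3 (m : nat) (Hm : 1 <= m) :
  (forall f : {ffun 'I_m -> bool} -> bool, monotone f ->
     [/\ is_USO (Phi f), acyclic (Phi f), locally_uniform (Phi f)
       & strongly_holt_klee (Phi f)]) /\
  (forall f g : {ffun 'I_m -> bool} -> bool, monotone f -> monotone g ->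
     (exists x, f x != g x) -> exists v i, Phi f v i != Phi g v i).
Proof.
split=> [f f_mono | f g _ _]; last exact: Phi_injective.
split; [exact: Phi_USO | exact: Phi_acyclic | exact: Phi_locally_uniform |].
exact: Phi_strongly_holt_klee.
Qed.
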